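(* Let $F$ be an algebraically closed field. (i) If $\mathrm{char}\,F\ne2$, then the $1$-dimensional maximal Mathieu subspaces of $M_2(F)$ are exactly the subspaces $F(I_2+c)$ with $c\in M_2(F)$ nonzero and nilpotent. (ii) If $\mathrm{char}\,F=2$, then $M_2(F)$ has no $1$-dimensional maximal Mathieu subspace.
   Context: Let $\mathcal A$ be an associative algebra over a field $F$. An $F$-subspace $M\subseteq\mathcal A$ is a Mathieu subspace (MS) of $\mathcal A$ if for all $a,b,c\in\mathcal A$ such that $a^m\in M$ for all $m\ge 1$, there exists $N$ (depending on $a,b,c$) such that $ba^mc\in M$ for all $m\ge N$. A maximal MS of $\mathcal A$ is a proper MS of $\mathcal A$ that is not properly contained in any proper MS of $\mathcal A$. *)

From HB Require Import structures.
From mathcomp Require Import all_boot all_order all_algebra.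
Set Implicit Arguments. Unset Strict Implicit. Unset Printing Implicit Defensive.
Import Order.TTheory GRing.Theory Num.Theory.
Local Open Scope ring_scope.

Definition mathieu_subspace (F : fieldType) (n : nat) (M : {vspace 'M[F]_n.+1}) : Prop :=
  forall a b c : 'M[F]_n.+1,
    (forall m : nat, (1 <= m)%N -> a ^+ m \in M) ->
    exists N : nat, forall m : nat, (N <= m)%N -> b * a ^+ m * c \in M.

Definition maximal_mathieu_subspace (F : fieldType) (n : nat) (M : {vspace 'M[F]_n.+1}) : Prop :=
  [/\ mathieu_subspace M, M != fullv &
     forall N : {vspace 'M[F]_n.+1},
       mathieu_subspace N -> N != fullv -> (M <= N)%VS -> N = M].

Definition nilpotent_mx (F : fieldType) (n : nat) (c : 'M[F]_n.+1) : Prop :=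
  exists k : nat, c ^+ k = 0.

From HB Require Import structures.
From mathcomp Require Import all_boot all_order all_algebra.
From mathcomp Require Import ring zify.
Import GRing.Theory.
Local Open Scope ring_scope.
Set Implicit Arguments. Unset Strict Implicit. Unset Printing Implicit Defensive.

(* A proper subspace of M_2(F) is a Mathieu subspace iff it contains no
   nonzero idempotent: an idempotent e != 0 of a Mathieu subspace M gives
   b e c \in M for all b, c, hence all matrix units lie in M; conversely, if M
   has no nonzero idempotent and a, a^2 \in M, Cayley-Hamilton forces a^2 = 0.
   A line F v is a maximal idempotent-free subspace only if tr v != 0,
   det v != 0 and (tr v)^2 = 4 det v: otherwise it can be enlarged, without
   creating idempotents, by a traceless matrix or by a nilpotent w with
   tr (v w) = 0 (the latter exists since F is algebraically closed).  In
   characteristic 2 this forces tr v = 0, and otherwise v is a multiple of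
   1 + c with c nilpotent.  Conversely, if N is idempotent-free and contains
   1 + c, then for w \in N some x = r (1 + c) + w is singular, hence
   nilpotent and orthogonal to c, hence a multiple of c; as c \notin N
   (1 = (1 + c) - c), x = 0 and w lies on the line. *)

Lemma mul_delta_mx_mid (R : pzRingType) n (e : 'M[R]_n) (k i j l : 'I_n) :
  delta_mx k i *m e *m delta_mx j l = e i j *: delta_mx k l.
Proof.
apply/matrixP => a b; rewrite mxE (bigD1 j) //= big1 => [|m mj]; last first.
  by rewrite [delta_mx j l m b]mxE (negPf mj) mulr0.
rewrite [delta_mx j l j b]mxE eqxx addr0 mxE (bigD1 i) //= big1 => [|m mi]; last first.
  by rewrite [delta_mx k i a m]mxE (negPf mi) andbF mul0r.
rewrite !mxE eqxx andbT addr0.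
by case: (a == k); case: (b == l); rewrite /= ?mul1r ?mul0r ?mulr1 ?mulr0.
Qed.

Section Lines.
Variables (K : fieldType) (vT : vectType K).

Lemma vlineZ (a : K) (v : vT) : a != 0 -> <[a *: v]>%VS = <[v]>%VS.
Proof.
move=> a_neq0; have [->|v_neq0] := eqVneq v 0; first by rewrite scaler0.
apply/eqP; rewrite eqEdim -memvE memvZ ?memv_line //= !dim_vline v_neq0.
by rewrite scaler_eq0 negb_or a_neq0 v_neq0.
Qed.

Lemma vline_vpick (U : {vspace vT}) : \dim U = 1%N -> U = <[vpick U]>%VS.
Proof.
move=> dimU; have pick_neq0 : vpick U != 0 by rewrite vpick0 -dimv_eq0 dimU.
apply/eqP; rewrite eq_sym eqEdim -memvE memv_pick.
by rewrite dimU dim_vline pick_neq0.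
Qed.

End Lines.

Lemma exists_quadratic_root (F : closedFieldType) (b c : F) :
  exists r, r ^+ 2 + b * r + c = 0.
Proof.
have [r root_r] := @solve_monicpoly F 2 (nth 0 [:: - c; - b]) isT.
exists r; move: root_r; rewrite !big_ord_recl big_ord0 /= expr0 expr1 mulr1 addr0 => ->.
ring.
Qed.

Lemma exists_isotropic (F : closedFieldType) (a b c : F) :
  exists x y, ((x != 0) || (y != 0)) /\ a * x ^+ 2 + b * x * y + c * y ^+ 2 = 0.
Proof.
have [a0|a_neq0] := eqVneq a 0.
  by exists 1, 0; rewrite oner_eq0 a0; split=> //; ring.
have [r root_r] := exists_quadratic_root (b / a) (c / a).
exists r, 1; rewrite oner_eq0 orbT; split=> //.
by apply: (mulfI (invr_neq0 a_neq0)); rewrite mulr0 -root_r; field.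
Qed.

(* (a, b, e) and (p, q, s) are the entries (0,0), (0,1), (1,0) of traceless
   nilpotent 2 x 2 matrices c, x with tr (c x) = 0; the conclusion says that
   they are proportional.  Each minor squared is a combination of the
   hypotheses. *)
Lemma nilpotent_pair_minors (F : fieldType) (a b e p q s : F) :
  a ^+ 2 + b * e = 0 -> p ^+ 2 + q * s = 0 -> 2 * a * p + b * s + e * q = 0 ->
  [/\ b * p = a * q, e * p = a * s & b * s = e * q].
Proof.
move=> Dc Dx T; have sq0 (u v : F) : (u - v) ^+ 2 = 0 -> u = v.
  by move/eqP; rewrite sqrf_eq0 subr_eq0 => /eqP.
split; apply: sq0.
- transitivity (b ^+ 2 * (p ^+ 2 + q * s) - b * q * (2 * a * p + b * s + e * q)
                + q ^+ 2 * (a ^+ 2 + b * e)); first by ring.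
  by rewrite Dc Dx T; ring.
- transitivity (e ^+ 2 * (p ^+ 2 + q * s) - e * s * (2 * a * p + b * s + e * q)
                + s ^+ 2 * (a ^+ 2 + b * e)); first by ring.
  by rewrite Dc Dx T; ring.
- transitivity ((2 * a * p + b * s + e * q) * (b * s + e * q - 2 * a * p)
                + 4 * p ^+ 2 * (a ^+ 2 + b * e) - 4 * b * e * (p ^+ 2 + q * s)).
    by ring.
  by rewrite Dc Dx T; ring.
Qed.

Section IdempotentFree.
Variables (F : fieldType) (n : nat).
Implicit Types (M N : {vspace 'M[F]_n.+1}) (e x : 'M[F]_n.+1).

Definition idempotent_free M := forall x, x \in M -> x * x = x -> x = 0.

Definition maximal_idempotent_free M :=
  idempotent_free M /\ forall N, idempotent_free N -> (M <= N)%VS -> N = M.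

Lemma idempotent_free_1 M : idempotent_free M -> 1 \notin M.
Proof. by move=> freeM; apply/negP => /freeM /(_ (mulr1 1)) /eqP; rewrite oner_eq0. Qed.

Lemma idempotent_free_proper M : idempotent_free M -> M != fullv.
Proof. by move/idempotent_free_1; apply: contraNneq => ->; rewrite memvf. Qed.

Lemma mathieu_idempotent_full M e :
  mathieu_subspace M -> e \in M -> e * e = e -> e != 0 -> M = fullv.
Proof.
move=> msM eM ee /matrix0Pn [i [j eij]].
have eX m : e ^+ m.+1 = e by elim: m => [|m IHm]; rewrite ?expr1 // exprS IHm.
have powM m : (1 <= m)%N -> e ^+ m \in M by move=> m_gt0; rewrite -(prednK m_gt0) eX.
have beM b c : b * e * c \in M.
  by have [N /(_ N.+1 (leqnSn N))] := msM e b c powM; rewrite eX.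
apply/eqP; rewrite eqEsubv subvf; apply/subvP => x _.
rewrite [x]matrix_sum_delta; apply: memv_suml => k _; apply: memv_suml => l _.
apply: memvZ; have -> : delta_mx k l = (e i j)^-1 *: (delta_mx k i * e * delta_mx j l).
  by rewrite -!mulmxE mul_delta_mx_mid scalerA mulVf // scale1r.
exact: memvZ.
Qed.

Lemma idempotent_free_mathieu M :
  mathieu_subspace M -> M != fullv -> idempotent_free M.
Proof.
move=> msM properM x xM xx; apply/eqP; apply: contraNT properM => x_neq0.
by rewrite (mathieu_idempotent_full msM xM xx x_neq0).
Qed.

Lemma exists_traceless_notin (U : {vspace 'M[F]_n.+1}) :
  (\dim U < n.+1 * n.+1 - 1)%N -> exists2 w, \tr w = 0 & w \notin U.
Proof.
move=> dimU; pose tr := linfun (mxtrace : 'M[F]_n.+1 -> F^o).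
have dim_ker : (n.+1 * n.+1 - 1 <= \dim (lker tr))%N.
  have := limg_ker_dim tr fullv; rewrite capfv dimvf /dim /=.
  have := dimvS (subvf (limg tr)); rewrite dimvf /dim /=.
  lia.
have /subvPn [w] : ~~ (lker tr <= U)%VS.
  by apply: contraTN dimU => /dimvS; rewrite -leqNgt; apply: leq_trans.
by rewrite memv_ker lfunE => /eqP; exists w.
Qed.

End IdempotentFree.

Section Matrix2.
Variable F : fieldType.
Implicit Types (x y c v w : 'M[F]_2) (M N : {vspace 'M[F]_2}).

Lemma ord2P (i : 'I_2) : i = 0 \/ i = 1.
Proof. by case: i => [[|[|//]] ?]; [left | right]; apply: val_inj. Qed.

Lemma ord0_ord2 : ord0 = 0 :> 'I_2. Proof. exact: val_inj. Qed.

Lemma lift0_ord2 (i : 'I_1) : lift 0 i = 1 :> 'I_2.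
Proof. by apply: val_inj; case: i => [[]]. Qed.

Lemma mx2_ext x y :
  x 0 0 = y 0 0 -> x 0 1 = y 0 1 -> x 1 0 = y 1 0 -> x 1 1 = y 1 1 -> x = y.
Proof.
move=> e00 e01 e10 e11; apply/matrixP => i j.
by case: (ord2P i) => ->; case: (ord2P j) => ->.
Qed.

Lemma tr_mx2 x : \tr x = x 0 0 + x 1 1.
Proof. by rewrite /mxtrace !big_ord_recl big_ord0 addr0 ord0_ord2 !lift0_ord2. Qed.

Lemma det_mx2 x : \det x = x 0 0 * x 1 1 - x 0 1 * x 1 0.
Proof.
rewrite (expand_det_row _ 0) !big_ord_recl big_ord0 /cofactor !det_mx11 !mxE /=.
rewrite ord0_ord2 !lift0_ord2 (_ : lift 1 0 = 0 :> 'I_2); last exact: val_inj.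
by rewrite /bump /= expr0 expr1; ring.
Qed.

Lemma mulmx2E x y i j : (x * y) i j = x i 0 * y 0 j + x i 1 * y 1 j.
Proof. by rewrite -mulmxE mxE !big_ord_recl big_ord0 addr0 ord0_ord2 lift0_ord2. Qed.

Lemma cayley_hamilton_mx2 x : x * x = \tr x *: x - \det x *: 1.
Proof. by apply: mx2_ext; rewrite mulmx2E tr_mx2 det_mx2 !mxE /=; ring. Qed.

Lemma det_mx2D x y :
  \det (x + y) = \det x + (\tr x * \tr y - \tr (x * y)) + \det y.
Proof. by rewrite !det_mx2 !tr_mx2 !mulmx2E !mxE; ring. Qed.

Lemma idempotent_mx2 x :
  x * x = x -> x != 0 -> x = 1 \/ \tr x = 1 /\ \det x = 0.
Proof.
move=> xx x_neq0; have CH := cayley_hamilton_mx2 x; rewrite xx in CH.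
have scalar_x : (\tr x - 1) *: x = \det x *: 1.
  by rewrite scalerBl scale1r [X in _ - X]CH opprB addrC subrK.
have [tr1|tr_neq1] := eqVneq (\tr x) 1.
  right; split=> //; move: scalar_x; rewrite tr1 subrr scale0r => /esym/eqP.
  by rewrite scaler_eq0 oner_eq0 orbF => /eqP.
move: xx x_neq0; have {scalar_x}-> : x = (\det x / (\tr x - 1)) *: 1.
  by rewrite mulrC -scalerA -scalar_x scalerA mulVf ?scale1r // subr_eq0.
set a := _ / _; rewrite -scalerAl mul1r scalerA => /eqP.
rewrite -subr_eq0 -scalerBl !scaler_eq0 oner_eq0 !orbF -{3}[a]mulr1 -mulrBr.
rewrite mulf_eq0 subr_eq0 => /orP [/eqP -> | /eqP -> _]; first by rewrite eqxx.
by left; rewrite scale1r.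
Qed.

Lemma det_mx2X x m : \det (x ^+ m) = \det x ^+ m.
Proof.
elim: m => [|m IHm]; first by rewrite !expr0 det1.
by rewrite !exprS -mulmxE det_mulmx IHm.
Qed.

Lemma nilpotent_mx2P c : nilpotent_mx c <-> \tr c = 0 /\ \det c = 0.
Proof.
split=> [[k ck] | [trc detc]]; last first.
  by exists 2%N; rewrite expr2 cayley_hamilton_mx2 trc detc !scale0r subr0.
have detc : \det c = 0.
  have : \det c ^+ k == 0 by rewrite -det_mx2X ck det0.
  by rewrite expf_eq0 => /andP [_ /eqP].
have cX m : c ^+ m.+1 = \tr c ^+ m *: c.
  elim: m => [|m IHm]; first by rewrite expr1 expr0 scale1r.
  rewrite exprS IHm -scalerAr cayley_hamilton_mx2 detc scale0r subr0.
  by rewrite scalerA -exprSr.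
split=> //; case: k ck => [/eqP|k]; first by rewrite expr0 oner_eq0.
rewrite cX => /eqP; rewrite scaler_eq0 expf_eq0 => /orP [/andP [_ /eqP //] | /eqP ->].
by rewrite mxtrace0.
Qed.

Lemma idempotent_free_singular M y :
  idempotent_free M -> y \in M -> \det y = 0 -> \tr y = 0.
Proof.
move=> freeM yM dety; apply/eqP; apply/negPn/negP => trace_neq0.
pose e := (\tr y)^-1 *: y.
have ee : e * e = e.
  rewrite cayley_hamilton_mx2 mxtraceZ detZ dety mulr0 scale0r subr0.
  by rewrite mulVf // scale1r.
move/eqP: (freeM e (memvZ _ yM) ee); rewrite scaler_eq0 invr_eq0 (negPf trace_neq0).
by move=> /eqP y0; move: trace_neq0; rewrite y0 mxtrace0 eqxx.
Qed.

Lemma mathieu_of_idempotent_free M : idempotent_free M -> mathieu_subspace M.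
Proof.
move=> freeM a b c powM.
have aM : a \in M by rewrite -[a]expr1 powM.
suff a2 : a * a = 0.
  by exists 2%N => m m_ge2; rewrite -(subnK m_ge2) exprD expr2 a2 !mulr0 mul0r mem0v.
have [deta|deta] := eqVneq (\det a) 0.
  rewrite cayley_hamilton_mx2 (idempotent_free_singular freeM aM deta) deta.
  by rewrite !scale0r subr0.
suff : 1 \in M by rewrite (negPf (idempotent_free_1 freeM)).
have -> : 1 = (\det a)^-1 *: (\tr a *: a - a * a).
  by rewrite [a * a]cayley_hamilton_mx2 opprB addrC subrK scalerA mulVf ?scale1r.
by rewrite memvZ // memvB ?memvZ // -expr2 powM.
Qed.

Lemma maximal_mathieu_mx2P M :
  maximal_mathieu_subspace M <-> maximal_idempotent_free M.
Proof.
split=> [[msM properM maxM] | [freeM maxM]].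
  split=> [|N freeN sMN]; first exact: idempotent_free_mathieu.
  by apply: maxM; [exact: mathieu_of_idempotent_free | exact: idempotent_free_proper |].
split=> [||N msN properN sMN].
- exact: mathieu_of_idempotent_free.
- exact: idempotent_free_proper.
- by apply: maxM => //; exact: idempotent_free_mathieu.
Qed.

Lemma maximal_line_extension v w :
  maximal_idempotent_free <[v]> -> w \notin <[v]>%VS ->
  ~ idempotent_free (<[v]> + <[w]>).
Proof.
move=> [_ maxv] w_notin free_vw; move: w_notin.
by rewrite -(maxv _ free_vw (addvSl _ _)) (subvP (addvSr _ _)) ?memv_line.
Qed.

Lemma traceless_line_not_maximal v : \tr v = 0 -> ~ maximal_idempotent_free <[v]>.
Proof.
move=> trv maxv; have v1 := idempotent_free_1 maxv.1.
have [w trw w_notin] :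
    exists2 w, \tr w = 0 & w \notin (<[v]> + <[1 : 'M[F]_2]>)%VS.
  apply: exists_traceless_notin; apply: leq_ltn_trans (dimv_add_leqif _ _).1 _.
  by rewrite !dim_vline (leq_ltn_trans (leq_add (leq_b1 _) (leq_b1 _))).
apply: (maximal_line_extension maxv (_ : w \notin <[v]>%VS)).
  by apply: contra w_notin; apply/subvP; apply: addvSl.
move=> _ /memv_addP [_ /vlineP [a ->] [_ /vlineP [b ->] ->]] xx.
apply/eqP; apply/negPn/negP => x_neq0.
have trx : \tr (a *: v + b *: w) = 0.
  by rewrite mxtraceD !mxtraceZ trv trw !mulr0 addr0.
case: (idempotent_mx2 xx x_neq0) => [x1 | []]; last first.
  by rewrite trx => /esym/eqP; rewrite oner_eq0.
have [b0|b_neq0] := eqVneq b 0.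
  by move: v1; rewrite -x1 b0 scale0r addr0 memvZ ?memv_line.
move: w_notin; have -> : w = b^-1 *: (1 - a *: v).
  by rewrite -x1 addrC addKr scalerA mulVf ?scale1r.
by apply/negP/negPn/memvZ; rewrite addrC memv_add ?memvN ?memvZ ?memv_line.
Qed.

Lemma idempotent_free_add_nilpotent v w :
  \tr w = 0 -> \det w = 0 -> \tr (v * w) = 0 ->
  \det v != 0 -> \tr v ^+ 2 != 4 * \det v -> idempotent_free (<[v]> + <[w]>).
Proof.
move=> trw detw trvw detv disc.
move=> _ /memv_addP [_ /vlineP [a ->] [_ /vlineP [b ->] ->]] xx.
have trx : \tr (a *: v + b *: w) = a * \tr v.
  by rewrite mxtraceD !mxtraceZ trw mulr0 addr0.
have detx : \det (a *: v + b *: w) = a ^+ 2 * \det v.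
  rewrite det_mx2D !detZ !mxtraceZ -scalerAl -scalerAr !mxtraceZ trw detw trvw.
  by ring.
apply/eqP; apply/negPn/negP => x_neq0.
case: (idempotent_mx2 xx x_neq0) => [x1 | [trx1 detx0]].
  have a2 : a ^+ 2 * \det v = 1 by rewrite -detx x1 det1.
  have atr : a * \tr v = 2 by rewrite -trx x1 mxtrace1.
  have a2_neq0 : a ^+ 2 != 0.
    by apply/eqP => a0; move: a2; rewrite a0 mul0r => /eqP; rewrite eq_sym oner_eq0.
  move/eqP: disc; apply; apply: (mulfI a2_neq0).
  by rewrite -exprMn atr mulrCA a2; ring.
move: detx0; rewrite detx => /eqP; rewrite mulf_eq0 (negPf detv) orbF sqrf_eq0.
by move=> /eqP a0; move: trx1; rewrite trx a0 mul0r => /eqP; rewrite eq_sym oner_eq0.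
Qed.

Lemma nilpotent_mx2_collinear c x :
  c != 0 -> \tr c = 0 -> \det c = 0 -> \tr x = 0 -> \det x = 0 ->
  \tr (c * x) = 0 -> x \in <[c]>%VS.
Proof.
move=> c_neq0 trc detc trx detx trcx.
have c11 : c 1 1 = - c 0 0 by apply/eqP; rewrite -addr_eq0 addrC -tr_mx2 trc.
have x11 : x 1 1 = - x 0 0 by apply/eqP; rewrite -addr_eq0 addrC -tr_mx2 trx.
have [bp ep bs] : [/\ c 0 1 * x 0 0 = c 0 0 * x 0 1,
    c 1 0 * x 0 0 = c 0 0 * x 1 0 & c 0 1 * x 1 0 = c 1 0 * x 0 1].
  apply: nilpotent_pair_minors.
  - by transitivity (- \det c); [rewrite det_mx2 c11; ring | rewrite detc oppr0].
  - by transitivity (- \det x); [rewrite det_mx2 x11; ring | rewrite detx oppr0].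
  - by transitivity (\tr (c * x)); [rewrite tr_mx2 !mulmx2E c11 x11; ring |].
have collinear k l : k != 0 -> k *: x = l *: c -> x \in <[c]>%VS.
  move=> k_neq0 kx; apply/vlineP; exists (k^-1 * l).
  by rewrite -scalerA -kx scalerA mulVf ?scale1r.
have [b0|b_neq0] := eqVneq (c 0 1) 0; last first.
  apply: (collinear _ (x 0 1) b_neq0); apply: mx2_ext; rewrite !mxE ?c11 ?x11.
  - by rewrite bp mulrC.
  - exact: mulrC.
  - by rewrite bs mulrC.
  - by rewrite !mulrN bp mulrC.
have [e0|e_neq0] := eqVneq (c 1 0) 0; last first.
  apply: (collinear _ (x 1 0) e_neq0); apply: mx2_ext; rewrite !mxE ?c11 ?x11.
  - by rewrite ep mulrC.
  - by rewrite -bs mulrC.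
  - exact: mulrC.
  - by rewrite !mulrN ep mulrC.
have a0 : c 0 0 = 0.
  by apply/eqP; rewrite -sqrf_eq0 -oppr_eq0 -detc det_mx2 c11 b0 e0; apply/eqP; ring.
case/eqP: c_neq0; apply: mx2_ext; rewrite !mxE ?c11 ?a0 ?b0 ?e0 ?oppr0 //.
Qed.

Lemma tr_unipotent c : \tr c = 0 -> \tr (1 + c) = 2.
Proof. by move=> trc; rewrite mxtraceD mxtrace1 trc addr0. Qed.

Lemma det_unipotent c : \tr c = 0 -> \det c = 0 -> \det (1 + c) = 1.
Proof. by move=> trc detc; rewrite det_mx2D det1 mxtrace1 mul1r trc detc; ring. Qed.

Lemma idempotent_free_unipotent_line c :
  (2 : F) != 0 -> c != 0 -> \tr c = 0 -> \det c = 0 -> idempotent_free <[1 + c]>.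
Proof.
move=> two_neq0 c_neq0 trc detc _ /vlineP [a ->] xx.
apply/eqP; apply/negPn/negP => x_neq0.
case: (idempotent_mx2 xx x_neq0) => [x1 | []]; last first.
  rewrite mxtraceZ detZ tr_unipotent // det_unipotent // mulr1 => tr1 /eqP.
  rewrite sqrf_eq0 => /eqP a0; move: tr1; rewrite a0 mul0r => /eqP.
  by rewrite eq_sym oner_eq0.
have a1 : a = 1.
  apply: (mulIf two_neq0).
  by rewrite mul1r -{1}(tr_unipotent trc) -mxtraceZ x1 mxtrace1.
move/eqP: c_neq0; apply; apply: (addrI 1).
by rewrite addr0 -[RHS]x1 a1 scale1r.
Qed.

End Matrix2.

Section ClosedField.
Variable F : closedFieldType.
Implicit Types (v w c : 'M[F]_2).

(* The witness w = (x, y)^T (-y, x) is nilpotent of rank one, and tr (v w)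
   is the binary quadratic form below evaluated at (x, y). *)
Lemma exists_nilpotent_orthogonal v :
  exists2 w, w != 0 & [/\ \tr w = 0, \det w = 0 & \tr (v * w) = 0].
Proof.
have [x [y [xy_neq0 iso]]] := exists_isotropic (v 1 0) (v 1 1 - v 0 0) (- v 0 1).
pose w : 'M[F]_2 := \matrix_(i, j) ([:: x; y]`_i * [:: - y; x]`_j).
exists w.
  apply: contraTneq xy_neq0 => /matrixP w0.
  have x0 : x * x = 0 by have := w0 0 1; rewrite !mxE.
  have y0 : y * y = 0.
    by have := w0 1 0; rewrite !mxE mulrN => /eqP; rewrite oppr_eq0 => /eqP.
  by rewrite -[x == 0]orbb -[y == 0]orbb -!mulf_eq0 x0 y0 eqxx.
split.
- by rewrite tr_mx2 !mxE /=; ring.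
- by rewrite det_mx2 !mxE /=; ring.
transitivity (v 1 0 * x ^+ 2 + (v 1 1 - v 0 0) * x * y + - v 0 1 * y ^+ 2) => //.
by rewrite tr_mx2 !mulmx2E !mxE /=; ring.
Qed.

Lemma maximal_line_shape v : maximal_idempotent_free <[v]> ->
  [/\ \tr v != 0, \det v != 0 & \tr v ^+ 2 = 4 * \det v].
Proof.
move=> maxv; have trv : \tr v != 0.
  by apply/eqP => /traceless_line_not_maximal; apply.
have detv : \det v != 0.
  by apply: contra trv => /eqP /(idempotent_free_singular maxv.1 (memv_line v)) ->.
split=> //; apply/eqP; apply/negPn/negP => disc.
have [w w_neq0 [trw detw trvw]] := exists_nilpotent_orthogonal v.
apply: (maximal_line_extension maxv _
  (idempotent_free_add_nilpotent trw detw trvw detv disc)).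
apply/vlineP => -[a wa]; move: detw; rewrite wa detZ => /eqP.
rewrite mulf_eq0 (negPf detv) orbF sqrf_eq0 => /eqP a0.
by move: w_neq0; rewrite wa a0 scale0r eqxx.
Qed.

Lemma maximal_unipotent_line c : (2 : F) != 0 ->
  c != 0 -> \tr c = 0 -> \det c = 0 -> maximal_idempotent_free <[1 + c]>.
Proof.
move=> two_neq0 c_neq0 trc detc.
split=> [|N freeN]; first exact: idempotent_free_unipotent_line.
rewrite -memvE => vN; apply/eqP; rewrite eqEsubv -memvE vN andbT.
apply/subvP => w wN.
have c_notin : c \notin N.
  by apply: contra (idempotent_free_1 freeN) => cN; rewrite -(addrK c 1) memvB.
(* r is chosen so that x below is singular, hence nilpotent. *)
have [r detr] := exists_quadratic_root (2 * \tr w - \tr ((1 + c) * w)) (\det w).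
pose x := r *: (1 + c) + w.
have xN : x \in N by rewrite memvD ?memvZ.
have detx : \det x = 0.
  rewrite -detr det_mx2D detZ !mxtraceZ -scalerAl mxtraceZ tr_unipotent //.
  by rewrite det_unipotent //; ring.
have trx := idempotent_free_singular freeN xN detx.
(* Otherwise t (1 + c) + x, with t = tr (c x), is singular of trace 2 t. *)
have trcx : \tr (c * x) = 0.
  apply/eqP; apply/negPn/negP => trcx_neq0.
  have : \det (\tr (c * x) *: (1 + c) + x) = 0.
    rewrite det_mx2D detZ !mxtraceZ -scalerAl mxtraceZ tr_unipotent //.
    by rewrite det_unipotent // trx detx mulrDl mul1r mxtraceD trx add0r; ring.
  move/(idempotent_free_singular freeN (memvD (memvZ _ vN) xN))/eqP.
  rewrite mxtraceD mxtraceZ tr_unipotent // trx addr0 mulf_eq0.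
  by rewrite (negPf trcx_neq0) (negPf two_neq0).
have /vlineP [mu x_mu] := nilpotent_mx2_collinear c_neq0 trc detc trx detx trcx.
have mu0 : mu = 0.
  apply: contraTeq c_notin => mu_neq0; rewrite negbK -[c](scalerK mu_neq0) -x_mu.
  exact: memvZ.
apply/vlineP; exists (- r).
by rewrite -(addKr (r *: (1 + c)) w) -/x x_mu mu0 scale0r addr0 scaleNr.
Qed.

Lemma maximal_line_unipotent v : (2 : F) != 0 -> maximal_idempotent_free <[v]> ->
  exists c, [/\ c != 0, \tr c = 0, \det c = 0 & <[v]>%VS = <[1 + c]>%VS].
Proof.
move=> two_neq0 maxv; have [trv detv disc] := maximal_line_shape maxv.
set k := 2 / \tr v.
have k_neq0 : k != 0 by rewrite mulf_neq0 ?invr_eq0.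
have trk : k * \tr v = 2 by rewrite divfK.
have detk : \det (k *: v) = 1.
  rewrite detZ expr_div_n mulrAC (_ : 2 ^+ 2 * \det v = \tr v ^+ 2).
    by rewrite divff ?expf_neq0.
  by rewrite disc; ring.
exists (k *: v - 1); rewrite [1 + _]addrC subrK vlineZ //; split=> //.
- apply: contraNneq (idempotent_free_1 maxv.1) => /subr0_eq <-.
  by rewrite memvZ ?memv_line.
- by rewrite mxtraceD raddfN /= mxtraceZ trk mxtrace1 subrr.
rewrite -scaleN1r det_mx2D detk -scalerAr mulr1 !mxtraceZ trk detZ det1 mxtrace1.
by ring.
Qed.

Lemma maximal_line_char2 v : (2 : F) = 0 -> ~ maximal_idempotent_free <[v]>.
Proof.
move=> two0 /maximal_line_shape [trv _ disc]; move: trv.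
have four : (4 : F) = 2 * 2 by ring.
by rewrite -sqrf_eq0 disc four two0 !mul0r eqxx.
Qed.

End ClosedField.

Theorem corollary3p4 (F : closedFieldType) :
  (~~ (2%N \in [pchar F]) ->
     forall M : {vspace 'M[F]_2},
       (\dim M = 1%N /\ maximal_mathieu_subspace M) <->
       (exists c : 'M[F]_2, [/\ c != 0, nilpotent_mx c & M = <[1 + c]>%VS]))
  /\
  (2%N \in [pchar F] ->
     forall M : {vspace 'M[F]_2},
       \dim M = 1%N -> ~ maximal_mathieu_subspace M).
Proof.
have pchar2E : (2%N \in [pchar F]) = ((2 : F) == 0) by rewrite inE.
split=> [|char2 M /vline_vpick -> /maximal_mathieu_mx2P]; last first.
  by apply: maximal_line_char2; apply/eqP; rewrite -pchar2E.
rewrite pchar2E => two_neq0 M.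
split=> [[/vline_vpick -> /maximal_mathieu_mx2P] |
         [c [c_neq0 /nilpotent_mx2P [trc detc] ->]]].
  move=> /(maximal_line_unipotent two_neq0) [c [c_neq0 trc detc ->]].
  by exists c; split=> //; apply/nilpotent_mx2P.
split; last exact/maximal_mathieu_mx2P/maximal_unipotent_line.
suff v_neq0 : 1 + c != 0 by rewrite dim_vline v_neq0.
by apply: contraNneq two_neq0 => c1_0; rewrite -(tr_unipotent trc) c1_0 mxtrace0.
Qed.
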